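(* Let $m>1$ and let $\gamma$ be a permutation of $(\mathbb{F}_2)^m$ with $0\gamma=0$. Then $\mathcal{N}(\gamma)\neq0$ if and only if $\gamma$ is strongly $1$-anti-invariant.
   Context: For Boolean functions $f,g:(\mathbb{F}_2)^m\to\mathbb{F}_2$, $\mathrm{d}(f,g)=|\{x: f(x)\ne g(x)\}|$; $\mathcal{A}_m$ is the set of affine Boolean functions (algebraic degree at most $1$); the non-linearity of $f$ is $\mathcal{N}(f)=\min\{\mathrm{d}(f,\alpha):\alpha\in\mathcal{A}_m\}$. For a vectorial function $F:(\mathbb{F}_2)^m\to(\mathbb{F}_2)^m$ with coordinate functions $F_1,\dots,F_m$ and $v\ne0$, the component is ${}_vF=\sum_i v_iF_i$, and $\mathcal{N}(F)=\min\{\mathcal{N}({}_vF): v\in(\mathbb{F}_2)^m\setminus\{0\}\}$. $F$ is strongly $1$-anti-invariant if for any two subspaces $U,W$ of $(\mathbb{F}_2)^m$ with $F(U)=W$, either $\dim U=\dim W<m-1$ or $U=W=(\mathbb{F}_2)^m$. *)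

(* (F_2)^m is modelled as row vectors 'rV['F_2]_m;
   subspaces are represented by square matrices via their row spaces (mxalgebra). *)
From HB Require Import structures.
From mathcomp Require Import all_boot all_order all_algebra all_fingroup.
Set Implicit Arguments. Unset Strict Implicit. Unset Printing Implicit Defensive.
Import GRing.Theory.
Local Open Scope ring_scope.

Notation vecF2 m := 'rV['F_2]_m.

Definition bdist (m : nat) (f g : vecF2 m -> 'F_2) : nat :=
  #|[set x : vecF2 m | f x != g x]|.

Definition affine_fun (m : nat) (a : 'cV['F_2]_m) (b : 'F_2) : vecF2 m -> 'F_2 :=
  fun x => (x *m a) 0 0 + b.

Definition nonlin (m : nat) (f : vecF2 m -> 'F_2) : nat :=
  \big[minn/(2 ^ m)%N]_(a : 'cV['F_2]_m) \big[minn/(2 ^ m)%N]_(b : 'F_2)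
     bdist f (affine_fun a b).

Definition component (m : nat) (F : vecF2 m -> vecF2 m) (v : vecF2 m)
  : vecF2 m -> 'F_2 := fun x => \sum_(i < m) v 0 i * F x 0 i.

Definition vnonlin (m : nat) (F : vecF2 m -> vecF2 m) : nat :=
  \big[minn/(2 ^ m)%N]_(v : vecF2 m | v != 0) nonlin (component F v).

Definition maps_onto (m : nat) (F : vecF2 m -> vecF2 m) (U W : 'M['F_2]_m) : Prop :=
  forall w : vecF2 m, (w <= W)%MS <-> exists2 u : vecF2 m, (u <= U)%MS & F u = w.

Definition strongly_1_anti_invariant (m : nat) (F : vecF2 m -> vecF2 m) : Prop :=
  forall U W : 'M['F_2]_m, maps_onto F U W ->
    (\rank U = \rank W /\ (\rank U < m - 1)%N) \/ (row_full U /\ row_full W).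

From HB Require Import structures.
From mathcomp Require Import all_boot all_order all_algebra all_fingroup.
From mathcomp Require Import mxabelem zify.
Set Implicit Arguments. Unset Strict Implicit. Unset Printing Implicit Defensive.
Import Order.TTheory GRing.Theory.
Local Open Scope ring_scope.

(* A bijection maps a subspace only onto a subspace of the same cardinality,
   so F(U) = W forces dim U = dim W, and strong 1-anti-invariance just says
   that gamma maps no hyperplane onto a hyperplane. For hyperplanes U = ker a
   and W = ker b, "x \in U <-> gamma x \in W" is the statement that the
   component <gamma x, b> equals the linear form <x, a>, i.e. has
   non-linearity 0; conversely a component at distance 0 from an affine
   function is linear (gamma 0 = 0 kills the constant) and its kernel is
   mapped onto a hyperplane. *)

Lemma bigmin_eq0P (I : finType) (P : pred I) (F : I -> nat) (N : nat) : (0 < N)%N ->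
  reflect (exists2 i, P i & F i = 0%N) (\big[minn/N]_(i | P i) F i == 0%N).
Proof.
move=> N_gt0; apply: (iffP idP) => [min0 | [j Pj Fj0]]; last first.
  by rewrite -leqn0 -Fj0 -minEnat; exact: (@bigmin_le_cond _ nat).
have [/exists_inP[i Pi /eqP] | /exists_inPn F_gt0] :=
  boolP [exists (i | P i), F i == 0%N]; first by exists i.
have : (0 < \big[minn/N]_(i | P i) F i)%N.
  by rewrite -minEnat; apply: (@lt_bigmin _ nat) => // i /F_gt0; rewrite -lt0n.
by rewrite (eqP min0).
Qed.

Lemma mx11_eq0 (R : nmodType) (M : 'M[R]_1) : (M == 0) = (M 0 0 == 0).
Proof.
apply/eqP/eqP => [-> | M00]; first by rewrite mxE.
by apply/matrixP => i j; rewrite !ord1 M00 mxE.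
Qed.

Lemma eqF2_by_zero (p q : 'F_2) : (p == 0) = (q == 0) -> p = q.
Proof.
by case: p => [[|[|?]] ?]; case: q => [[|[|?]] ?] //= _; apply: val_inj.
Qed.

Lemma hyperplane_kernel (F : fieldType) (k n : nat) (U : 'M[F]_(k, n)) :
  (0 < n)%N -> \rank U = (n - 1)%N ->
  exists2 a : 'cV[F]_n, a != 0 & forall u : 'rV_n, (u <= U)%MS = (u *m a == 0).
Proof.
move=> n_gt0 rU; set C := cokermx U.
have rC : \rank C = 1%N by rewrite mxrank_coker rU; lia.
have [j Cj_neq0] : exists j, col j C != 0.
  apply/existsP; apply: contraT; rewrite negb_exists => /forallP Ccol0.
  suff C0 : C = 0 by move: rC; rewrite C0 mxrank0.
  apply/matrixP => i l; have /eqP/matrixP/(_ i 0) := negbNE (Ccol0 l).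
  by rewrite !mxE.
have /submxP[D CD] : (C^T <= row j C^T)%MS.
  rewrite -(mxrank_leqif_sup (row_sub j C^T)).2 mxrank_tr rC.
  by rewrite rank_rV -tr_col trmx_eq0 Cj_neq0.
exists (col j C) => // u; rewrite submxE -/C.
apply/eqP/eqP => [uC0 | uCj0]; first by rewrite colE mulmxA uC0 mul0mx.
have -> : C = col j C *m D^T by rewrite -[LHS]trmxK CD trmx_mul tr_row trmxK.
by rewrite mulmxA uCj0 mul0mx.
Qed.

Lemma bdist_eq0P (m : nat) (f g : vecF2 m -> 'F_2) : bdist f g = 0%N <-> f =1 g.
Proof.
rewrite /bdist; split => [/eqP | fg].
  by rewrite cards_eq0 => /eqP/setP fg x; have := fg x; rewrite !inE => /negbFE/eqP.
by apply/eqP; rewrite cards_eq0; apply/eqP/setP => x; rewrite !inE fg eqxx.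
Qed.

Lemma nonlin_eq0P (m : nat) (f : vecF2 m -> 'F_2) :
  nonlin f = 0%N <-> exists a b, f =1 affine_fun a b.
Proof.
have pos : (0 < 2 ^ m)%N by rewrite expn_gt0.
rewrite /nonlin; split => [/eqP/(bigmin_eq0P _ _ pos)[a _ /eqP] | [a [b fab]]].
  by move/(bigmin_eq0P _ _ pos) => [b _ /bdist_eq0P fab]; exists a, b.
apply/eqP/(bigmin_eq0P _ _ pos); exists a => //; apply/eqP/(bigmin_eq0P _ _ pos).
by exists b => //; apply/bdist_eq0P.
Qed.

Lemma vnonlin_eq0P (m : nat) (F : vecF2 m -> vecF2 m) :
  vnonlin F = 0%N <-> exists2 v, v != 0 & nonlin (component F v) = 0%N.
Proof.
have pos : (0 < 2 ^ m)%N by rewrite expn_gt0.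
by split => [/eqP/(bigmin_eq0P _ _ pos) | /(bigmin_eq0P _ _ pos)/eqP].
Qed.

Lemma componentE (m : nat) (F : vecF2 m -> vecF2 m) (v x : vecF2 m) :
  component F v x = (F x *m v^T) 0 0.
Proof. by rewrite /component mxE; apply: eq_bigr => i _; rewrite mxE mulrC. Qed.

Lemma affine_component_linear (m : nat) (F : vecF2 m -> vecF2 m) v a b :
  F 0 = 0 -> component F v =1 affine_fun a b ->
  forall x, component F v x = (x *m a) 0 0.
Proof.
move=> F_0 Fab x; have := Fab 0; rewrite componentE F_0 /affine_fun !mul0mx mxE add0r.
by move=> b0; rewrite Fab /affine_fun -b0 mxE addr0.
Qed.

Lemma maps_onto_rank (m : nat) (F : vecF2 m -> vecF2 m) (U W : 'M['F_2]_m) :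
  injective F -> maps_onto F U W -> \rank U = \rank W.
Proof.
move=> F_inj FUW.
have rowgW : rowg W = F @: rowg U.
  apply/setP => w; rewrite inE; apply/idP/imsetP => [/FUW[u Uu <-] | [u]].
    by exists u; rewrite ?inE.
  by rewrite inE => Uu ->; apply/FUW; exists u.
have := card_rowg W; rewrite rowgW card_imset // !card_rowg card_Fp //.
by move/eqP; rewrite eqn_exp2l // => /eqP.
Qed.

Lemma maps_onto_hyperplanes_linear (m : nat) (F : vecF2 m -> vecF2 m)
    (U W : 'M['F_2]_m) (a b : 'cV['F_2]_m) :
  injective F -> maps_onto F U W ->
  (forall u : vecF2 m, (u <= U)%MS = (u *m a == 0)) ->
  (forall w : vecF2 m, (w <= W)%MS = (w *m b == 0)) ->
  forall x, component F b^T x = (x *m a) 0 0.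
Proof.
move=> F_inj FUW Ua Wb x; rewrite componentE trmxK; apply: eqF2_by_zero.
rewrite -!mx11_eq0 -Wb -Ua; apply/idP/idP => [/FUW[u Uu /F_inj <-] // | Ux].
by apply/FUW; exists x.
Qed.

Lemma linear_component_maps_onto (m : nat) (gamma : {perm vecF2 m}) (v : vecF2 m)
    (a : 'cV['F_2]_m) :
  (forall x, component (fun x => gamma x) v x = (x *m a) 0 0) ->
  maps_onto (fun x => gamma x) (kermx a) (kermx v^T).
Proof.
move=> lin w; rewrite sub_kermx mx11_eq0; split => [w0 | [u]].
  exists ((gamma^-1)%g w); last exact: permKV.
  by rewrite sub_kermx mx11_eq0 -lin componentE permKV.
by rewrite sub_kermx mx11_eq0 -lin componentE => u0 <-.
Qed.

Theorem proposition5p3 (m : nat) (hm : (1 < m)%N) (gamma : {perm 'rV['F_2]_m})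
  (h0 : gamma 0%R = 0%R) :
  vnonlin (fun x => gamma x) <> 0%N <-> strongly_1_anti_invariant (fun x => gamma x).
Proof.
have m_gt0 : (0 < m)%N by apply: ltnW.
split => [nonlin_neq0 U W gUW | anti /vnonlin_eq0P[v v_neq0 /nonlin_eq0P[a [b vab]]]].
  have rUW := maps_onto_rank (@perm_inj _ gamma) gUW.
  have := rank_leq_col U; rewrite leq_eqVlt => /orP[/eqP rU | rU_lt].
    by right; split; rewrite /row_full -?rUW rU.
  have [rU_small | rU_ge] := ltnP (\rank U) (m - 1); first by left.
  have rU : \rank U = (m - 1)%N by lia.
  have [a _ Ua] := hyperplane_kernel m_gt0 rU.
  have [b b_neq0 Wb] := hyperplane_kernel m_gt0 (etrans (esym rUW) rU).
  case: nonlin_neq0; apply/vnonlin_eq0P; exists b^T; first by rewrite trmx_eq0.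
  apply/nonlin_eq0P; exists a, 0 => x; rewrite /affine_fun addr0.
  exact: maps_onto_hyperplanes_linear (@perm_inj _ gamma) gUW Ua Wb x.
have lin := affine_component_linear h0 vab.
have rW : \rank (kermx v^T) = (m - 1)%N by rewrite mxrank_ker mxrank_tr rank_rV v_neq0.
have gUW := linear_component_maps_onto lin.
case: (anti _ _ gUW) => [[_] | [_]].
  by rewrite (maps_onto_rank (@perm_inj _ gamma) gUW) rW ltnn.
by rewrite /row_full rW; lia.
Qed.
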